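(* Let $\alpha>0$ and $\hbar>0$ be constants, let $\tilde g:\mathbb{R}\setminus\{0\}\to\mathbb{R}$ be continuously differentiable, and let $\psi:\mathbb{R}\to\mathbb{R}$ be a nonzero real-valued square-integrable function, continuously differentiable on $\mathbb{R}\setminus\{0\}$, such that the quantities $$\mathcal{A}=4\pi\int_{\mathbb{R}}dp\,\frac{\psi(p)^{2}}{p^{4}},\qquad \mathcal{B}=8\pi\int_{\mathbb{R}}dp\,\frac{d\tilde g(p)}{dp}\,\frac{\psi(p)^{2}}{p^{2}},\qquad \mathcal{C}=4\pi\int_{\mathbb{R}}dp\,\left\{\hbar^{2}\left[\frac{d\psi(p)}{dp}\right]^{2}+\left[\frac{d\tilde g(p)}{dp}\right]^{2}\psi(p)^{2}\right\}$$ are finite. Then $\mathcal{B}^{2}<4\mathcal{A}\mathcal{C}$. Consequently the quadratic function $\tau\mapsto \mathcal{A}(\alpha^{2}\tau)^{2}+\mathcal{B}(\alpha^{2}\tau)+\mathcal{C}$ has a strictly positive minimum over $\tau\in\mathbb{R}$.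
   Context: The quadratic $\mathcal{A}(\alpha^{2}\tau)^{2}+\mathcal{B}(\alpha^{2}\tau)+\mathcal{C}$ equals, for real $\psi$, the function $4\pi\int_{\mathbb{R}}dp\,\left|\left(\tilde g'(p)+\alpha^{2}\tau/p^{2}\right)\psi(p)-i\hbar\psi'(p)\right|^{2}$, the expectation value of the gauge-invariant area of 2-spheres at relational time $\tau$ for an arbitrary clock choice encoded by $\tilde g$. *)

From HB Require Import structures.
From mathcomp Require Import all_boot all_order all_algebra.
From mathcomp Require Import all_classical all_reals all_analysis.
Set Implicit Arguments. Unset Strict Implicit. Unset Printing Implicit Defensive.
Import Order.TTheory GRing.Theory Num.Theory.
Import numFieldNormedType.Exports.
Local Open Scope classical_set_scope.
Local Open Scope ring_scope.

(* Integrands of A, B, C (the derivative is derive1; at p = 0 the value is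
   irrelevant: a single point is Lebesgue-null; also 0^-1 = 0 in MathComp). *)
Definition integrandA {R : realType} (psi : R -> R) (p : R) : R :=
  psi p ^+ 2 / p ^+ 4.
Definition integrandB {R : realType} (g psi : R -> R) (p : R) : R :=
  derive1 g p * (psi p ^+ 2 / p ^+ 2).
Definition integrandC {R : realType} (hbar : R) (g psi : R -> R) (p : R) : R :=
  hbar ^+ 2 * (derive1 psi p) ^+ 2 + (derive1 g p) ^+ 2 * psi p ^+ 2.

Definition cA {R : realType} (psi : R -> R) : R :=
  4 * pi * Rintegral (@lebesgue_measure R) setT (integrandA psi).
Definition cB {R : realType} (g psi : R -> R) : R :=
  8 * pi * Rintegral (@lebesgue_measure R) setT (integrandB g psi).
Definition cC {R : realType} (hbar : R) (g psi : R -> R) : R :=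
  4 * pi * Rintegral (@lebesgue_measure R) setT (integrandC hbar g psi).

Definition areaQ {R : realType} (alpha hbar : R) (g psi : R -> R) (tau : R) : R :=
  cA psi * (alpha ^+ 2 * tau) ^+ 2 + cB g psi * (alpha ^+ 2 * tau) + cC hbar g psi.

Definition C1_off0 {R : realType} (f : R -> R) : Prop :=
  forall x : R, x != 0 -> derivable f x 1 /\ {for x, continuous (derive1 f)}.

From HB Require Import structures.
From mathcomp Require Import all_boot all_order all_algebra.
From mathcomp Require Import all_classical all_reals all_analysis.
From mathcomp Require Import ring lra.
Set Implicit Arguments. Unset Strict Implicit. Unset Printing Implicit Defensive.
Import Order.TTheory GRing.Theory Num.Theory.
Import numFieldNormedType.Exports.
Local Open Scope classical_set_scope.
Local Open Scope ring_scope.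

(* Completing the square, [A t^2 + B t + C] is [4 pi] times the integral of
   [(g' + t / p^2)^2 psi^2 + hbar^2 psi'^2 >= 0]. If it vanished, [psi'] would
   vanish almost everywhere, hence (being continuous off 0) everywhere off 0,
   so [psi] would be constant on each half-line, and square integrability
   would force [psi = 0] a.e., which is excluded. Similarly [A > 0]. A
   quadratic that is everywhere positive with a positive leading coefficient
   has a negative discriminant, and then its minimum is positive. *)

Section integral_facts.
Context d (T : measurableType d) (R : realType) (mu : {measure set T -> \bar R}).

Lemma Rintegral_gt0_ae (f : T -> R) :
  mu.-integrable setT (EFin \o f) -> (forall x, 0 <= f x) ->
  ~ {ae mu, forall x, f x = 0} -> 0 < Rintegral mu setT f.
Proof.
move=> fi f_ge0 f_not_ae0.
rewrite lt_def Rintegral_ge0 // andbT; apply/negP => /eqP If0; apply: f_not_ae0.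
have absIf0 : (\int[mu]_(x in setT) `|(f x)%:E| = 0)%E.
  under eq_integral => x _ do rewrite gee0_abs ?lee_fin //.
  by rewrite -(fineK (integrable_fin_num measurableT fi)) -/(Rintegral _ _ _) If0.
have /ae_eq_integral_abs := absIf0.
by move/(_ measurableT (measurable_int _ fi)); apply: filterS => x /(_ I) [].
Qed.

Lemma sqr_integrable_cst_eq0 (f : T -> R) (S : set T) (c : R) :
  measurable S -> mu S = +oo%E -> (forall x, S x -> f x = c) ->
  mu.-integrable setT (fun x => (f x ^+ 2)%:E) -> c = 0.
Proof.
move=> mS muS fS /integrableP[mf2]; apply: contraTeq => c_neq0; rewrite -leNgt.
under eq_integral => x _ do rewrite gee0_abs ?lee_fin ?sqr_ge0 //.
apply: le_trans (ge0_subset_integral _ _ _ mf2 _ (subsetT S)) => //; last first.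
  by move=> x _; rewrite lee_fin sqr_ge0.
rewrite (eq_integral (cst (c ^+ 2)%:E)); last by move=> x /set_mem /fS ->.
by rewrite integral_cst // muS gt0_muley // lte_fin exprn_even_gt0.
Qed.

Lemma Rintegral_lincomb3 (f1 f2 f3 : T -> R) (a b : R) :
  mu.-integrable setT (EFin \o f1) -> mu.-integrable setT (EFin \o f2) ->
  mu.-integrable setT (EFin \o f3) ->
  mu.-integrable setT (EFin \o (fun x => a * f1 x + b * f2 x + f3 x)) /\
  Rintegral mu setT (fun x => a * f1 x + b * f2 x + f3 x) =
    a * Rintegral mu setT f1 + b * Rintegral mu setT f2 + Rintegral mu setT f3.
Proof.
move=> i1 i2 i3.
have intZ k f : mu.-integrable setT (EFin \o f) ->
    mu.-integrable setT (EFin \o (fun x => k * f x)).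
  move=> fi; apply: eq_integrable measurableT _ _ _ (integrableZl measurableT k fi).
  by move=> x _ /=; rewrite EFinM.
have intD f g : mu.-integrable setT (EFin \o f) -> mu.-integrable setT (EFin \o g) ->
    mu.-integrable setT (EFin \o (fun x => f x + g x)).
  move=> fi gi; apply: eq_integrable measurableT _ _ _ (integrableD measurableT fi gi).
  by move=> x _ /=; rewrite EFinD.
have i1' := intZ a _ i1; have i2' := intZ b _ i2; have i12 := intD _ _ i1' i2'.
split; first exact: intD.
by rewrite RintegralD //= RintegralD //= !RintegralZl.
Qed.

End integral_facts.

(* The library's [Hint Extern] for this instance does not fire here. *)
#[local] Instance ae_lebesgue_filter (R : realType) :
  Filter (almost_everywhere (@lebesgue_measure R)) :=
  ae_filter_ringOfSetsType _.

Section lebesgue_line.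
Context (R : realType).
Local Notation leb := (@lebesgue_measure R).

Lemma ae_neq0 : {ae leb, forall x : R, x != 0}.
Proof.
exists [set 0]; split => //; first by rewrite lebesgue_measure_set1.
by move=> x /= /negP; rewrite negbK => /eqP.
Qed.

Lemma continuous_ae_eq0 (f : R -> R) (x : R) :
  {for x, continuous f} -> {ae leb, forall y, f y = 0} -> f x = 0.
Proof.
move=> fx [N [mN N0 fN]]; apply/eqP/contraT => fx_neq0.
have /nbhs_ballP[e /= e_gt0 fe] : \forall y \near x, f y != 0.
  exact: cvgr_neq0 fx fx_neq0.
have : leb (ball x e) = 0.
  apply: (subset_measure0 _ mN _ N0) => [|y /fe /eqP fy]; last exact: fN.
  exact: measurable_realfun.measurable_ball.
by rewrite lebesgue_measure_ball ?ltW // => -[] /eqP; rewrite mulrn_eq0 /= gt_eqF.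
Qed.

Lemma derive1_eq0_segment (f : R -> R) (a b : R) : a <= b ->
  (forall z, a <= z <= b -> derivable f z 1 /\ derive1 f z = 0) -> f a = f b.
Proof.
move=> ab f'0.
have [z zab] : exists2 z, z \in `[a, b] & f b - f a = derive1 f z * (b - a).
  apply: MVT_segment => // [z|].
    rewrite in_itv /= => /andP[az zb].
    by rewrite derive1E; apply/derivableP; have [] := f'0 z; rewrite ?ltW.
  apply: continuous_in_subspaceT => z; rewrite inE /= in_itv /= => /f'0[fz _].
  exact/differentiable_continuous/derivable1_diffP.
by move: zab; rewrite in_itv /= => /f'0[_ ->] /eqP; rewrite mul0r subr_eq0 => /eqP.
Qed.

Lemma derive1_eq0_off0_same_sign (f : R -> R) (x y : R) :
  (forall z, z != 0 -> derivable f z 1 /\ derive1 f z = 0) -> 0 < x * y -> f x = f y.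
Proof.
wlog xy : x y / x <= y => [sym f'0 xy0|f'0 xy0].
  by have [/sym->|/ltW/sym->] := leP x y; rewrite // mulrC.
apply: derive1_eq0_segment => // z /andP[xz zy]; apply: f'0.
by apply/eqP => z0; move: xz zy; rewrite z0 => x_le0 y_ge0; nra.
Qed.

Lemma sqr_integrable_derive1_eq0_off0 (f : R -> R) :
  (forall z, z != 0 -> derivable f z 1 /\ derive1 f z = 0) ->
  leb.-integrable setT (fun x => (f x ^+ 2)%:E) -> forall x, x != 0 -> f x = 0.
Proof.
move=> f'0 f2i x; case: ltgtP => // [x_lt0|x_gt0] _.
- have muS : leb [set` `]-oo, 0[%R] = +oo%E.
    by rewrite lebesgue_measure_itv /= ltNyr.
  apply: (@sqr_integrable_cst_eq0 _ _ _ leb f _ (f x) _ muS _ f2i) => // y /=.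
  rewrite in_itv /= => y_lt0.
  by apply: derive1_eq0_off0_same_sign; rewrite // nmulr_rgt0.
- have muS : leb [set` `]0, +oo[%R] = +oo%E.
    by rewrite lebesgue_measure_itv /= ltry.
  apply: (@sqr_integrable_cst_eq0 _ _ _ leb f _ (f x) _ muS _ f2i) => // y /=.
  rewrite in_itv /= andbT => y_gt0.
  by apply: derive1_eq0_off0_same_sign; rewrite // mulr_gt0.
Qed.

Lemma C1_off0_ae_derive1_eq0 (f : R -> R) : C1_off0 f ->
  leb.-integrable setT (fun x => (f x ^+ 2)%:E) ->
  {ae leb, forall x, derive1 f x = 0} -> {ae leb, forall x, f x = 0}.
Proof.
move=> f_C1 f2i f'_ae0.
have f'0 z : z != 0 -> derivable f z 1 /\ derive1 f z = 0.
  by move=> z0; have [fz f'z] := f_C1 z z0; split; last exact: continuous_ae_eq0.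
by apply: filterS ae_neq0 => x; exact: sqr_integrable_derive1_eq0_off0.
Qed.

End lebesgue_line.

Section quadratic.
Context (R : realFieldType).

Lemma quadratic_gt0_discr_lt (a b c : R) : 0 < a ->
  (forall t, 0 < a * t ^+ 2 + 2 * b * t + c) -> b ^+ 2 < a * c.
Proof.
move=> a_gt0 /(_ (- b / a)).
have -> : a * (- b / a) ^+ 2 + 2 * b * (- b / a) + c = (a * c - b ^+ 2) / a.
  by field; rewrite gt_eqF.
by rewrite pmulr_lgt0 ?invr_gt0 // subr_gt0.
Qed.

Lemma quadratic_min_gt0 (a b c : R) : 0 < a -> b ^+ 2 < 4 * a * c ->
  exists y0 : R, 0 < a * y0 ^+ 2 + b * y0 + c /\
    forall y, a * y0 ^+ 2 + b * y0 + c <= a * y ^+ 2 + b * y + c.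
Proof.
move=> a_gt0 disc; have a_neq0 : a != 0 by rewrite gt_eqF.
exists (- b / (2 * a)); split.
  have -> : a * (- b / (2 * a)) ^+ 2 + b * (- b / (2 * a)) + c =
            (4 * a * c - b ^+ 2) / (4 * a) by field.
  by rewrite divr_gt0 ?subr_gt0 ?mulr_gt0.
move=> y; rewrite -subr_ge0.
have -> : a * y ^+ 2 + b * y + c - (a * (- b / (2 * a)) ^+ 2 + b * (- b / (2 * a)) + c)
          = a * (y + b / (2 * a)) ^+ 2 by field.
by rewrite mulr_ge0 ?sqr_ge0 ?ltW.
Qed.

End quadratic.

Lemma integrand_comb_sqr (R : realType) (hbar t p : R) (g psi : R -> R) :
  t ^+ 2 * integrandA psi p + 2 * t * integrandB g psi p + integrandC hbar g psi p =
  (derive1 g p + t / p ^+ 2) ^+ 2 * psi p ^+ 2 + hbar ^+ 2 * derive1 psi p ^+ 2.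
Proof.
rewrite /integrandA /integrandB /integrandC.
have -> : p ^+ 4 = (p ^+ 2) ^+ 2 by rewrite -exprM.
by rewrite -exprVn; ring.
Qed.

Section area_quadratic.
Context (R : realType) (hbar : R) (g psi : R -> R).
Local Notation leb := (@lebesgue_measure R).
Hypotheses (hbar_gt0 : 0 < hbar) (psi_C1 : C1_off0 psi)
  (psi2_int : leb.-integrable setT (fun p => (psi p ^+ 2)%:E))
  (psi_neq0 : ~ {ae leb, forall p, psi p = 0})
  (intA : leb.-integrable setT (fun p => (integrandA psi p)%:E))
  (intB : leb.-integrable setT (fun p => (integrandB g psi p)%:E))
  (intC : leb.-integrable setT (fun p => (integrandC hbar g psi p)%:E)).

Let a := Rintegral leb setT (integrandA psi).
Let b := Rintegral leb setT (integrandB g psi).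
Let c := Rintegral leb setT (integrandC hbar g psi).

Lemma integralA_gt0 : 0 < a.
Proof.
apply: Rintegral_gt0_ae intA _ _ => [p|A_ae0].
  by rewrite /integrandA mulr_ge0 ?sqr_ge0 // invr_ge0 exprn_even_ge0.
apply: psi_neq0; apply: filterS2 A_ae0 (ae_neq0 R) => p /eqP.
rewrite /integrandA mulf_eq0 invr_eq0 !expf_eq0 /=.
by case/orP=> /eqP-> //; rewrite eqxx.
Qed.

Lemma cA_gt0 : 0 < cA psi.
Proof. by rewrite /cA !mulr_gt0 ?pi_gt0 ?integralA_gt0. Qed.

Lemma integral_quadratic_gt0 (t : R) : 0 < a * t ^+ 2 + 2 * b * t + c.
Proof.
have [int_h comb] := Rintegral_lincomb3 (t ^+ 2) (2 * t) intA intB intC.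
rewrite [a * _]mulrC [2 * b * t]mulrAC -comb.
have sqr_mul_ge0 (x y : R) : 0 <= x ^+ 2 * y ^+ 2 by rewrite mulr_ge0 ?sqr_ge0.
apply: Rintegral_gt0_ae int_h _ _ => [p|h_ae0].
  by rewrite integrand_comb_sqr addr_ge0.
apply: psi_neq0; apply: C1_off0_ae_derive1_eq0 => //; apply: filterS h_ae0 => p /eqP.
rewrite integrand_comb_sqr paddr_eq0 // => /andP[_].
by rewrite mulf_eq0 !sqrf_eq0 (gt_eqF hbar_gt0) => /eqP.
Qed.

Lemma cB_sqr_lt : cB g psi ^+ 2 < 4 * cA psi * cC hbar g psi.
Proof.
have disc := quadratic_gt0_discr_lt integralA_gt0 integral_quadratic_gt0.
rewrite /cA /cB /cC -/a -/b -/c.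
have -> : (8 * pi * b) ^+ 2 = 64 * pi ^+ 2 * b ^+ 2 by ring.
have -> : 4 * (4 * pi * a) * (4 * pi * c) = 64 * pi ^+ 2 * (a * c) by ring.
by rewrite ltr_pM2l // mulr_gt0 // exprn_gt0 // pi_gt0.
Qed.

End area_quadratic.

Theorem mainTheorem2 (R : realType) (alpha hbar : R) (g psi : R -> R) :
  0 < alpha -> 0 < hbar ->
  C1_off0 g ->
  C1_off0 psi ->
  measurable_fun setT psi ->
  (@lebesgue_measure R).-integrable setT (fun p => (psi p ^+ 2)%:E) ->
  ~ {ae (@lebesgue_measure R), forall p, psi p = 0} ->
  (@lebesgue_measure R).-integrable setT (fun p => (integrandA psi p)%:E) ->
  (@lebesgue_measure R).-integrable setT (fun p => (integrandB g psi p)%:E) ->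
  (@lebesgue_measure R).-integrable setT (fun p => (integrandC hbar g psi p)%:E) ->
  cB g psi ^+ 2 < 4 * cA psi * cC hbar g psi /\
  exists tau0 : R, 0 < areaQ alpha hbar g psi tau0 /\
    forall tau : R, areaQ alpha hbar g psi tau0 <= areaQ alpha hbar g psi tau.
Proof.
move=> alpha_gt0 hbar_gt0 _ psi_C1 _ psi2_int psi_neq0 intA intB intC.
have disc := cB_sqr_lt hbar_gt0 psi_C1 psi2_int psi_neq0 intA intB intC.
have [y0 [q_y0_gt0 q_y0_min]] := quadratic_min_gt0 (cA_gt0 psi_neq0 intA) disc.
have alpha2_neq0 : alpha ^+ 2 != 0 by rewrite expf_neq0 // gt_eqF.
split => //; exists (y0 / alpha ^+ 2).
by rewrite /areaQ [alpha ^+ 2 * (y0 / _)]mulrC divfK.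
Qed.
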